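(* Consider a symbolic generalized matrix chain of $n\ge 4$ matrices. Let $\mathcal{E}_{\rm s}$ be a set of $n_{\rm c}$ variants constructed as follows: for each equivalence class $C$ of the size symbols, select a size variable $q_h\in C$ and add the corresponding fanning-out variant $E^h$ to $\mathcal{E}_{\rm s}$. Then $P(\mathcal{E}_{\rm s})$ is finite.
   Context: A generalized matrix chain (GMC) is a product $\mathrm{op}(M_1)\cdots\mathrm{op}(M_n)$ where $M_i$ has size $q_{i-1}\times q_i$, $\mathrm{op}(M)\in\{M,M^T,M^{-1},M^{-T}\}$, and each $M_i$ carries a structure (general, symmetric, lower-/upper-triangular; non-general structures imply squareness) and a property (singular, invertible, symmetric positive-definite, orthogonal). The shape is fixed and sizes are symbolic. If $M_i$ is necessarily square (non-general structure, or inverted), then $q_{i-1}$ and $q_i$ are bound by equality, written $q_{i-1}\sim q_i$; this relation generates an equivalence relation partitioning the size symbols $q_0,\ldots,q_n$ into $n_{\rm c}=n-n_{\rm sq}+1$ equivalence classes, $n_{\rm sq}$ being the number of necessarily square matrices. An instance is $\boldsymbol{q}\in\mathbb{N}^{n+1}$ with equal values within each equivalence class. Transposition is ignored. Each parenthesization determines exactly one variant: a sequence of $n-1$ associations $(K_i,(a_i,b_i,c_i))$, $0\le a_i<b_i<c_i\le n$, the $i$-th combining via kernel $K_i$ operands of sizes $q_{a_i}\times q_{b_i}$ and $q_{b_i}\times q_{c_i}$. It is built by performing the leftmost available association first and, per association: propagating an inversion to the result when both operands are inverted ($X^{-1}Y^{-1}=(YX)^{-1}$) or when one operand is inverted and general/symmetric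 while the other is orthogonal or non-singular triangular; assigning the most specialized matrix-product kernel (GEMM, SYMM, TRMM, SYSYMM, TRSYMM, TRTRMM) or linear-solve kernel (GEGESV, GESYSV, GETRSV, SYGESV, SYSYSV, SYTRSV, POGESV, POSYSV, POTRSV, TRSM, TRSYSV, TRTRSV; the inverted operand is the coefficient matrix); and inferring the features and sizes of the result by fixed rules. $\mathcal{A}$ is the set of all variants. The cost (FLOPs) of variant $A$ on $\boldsymbol{q}$ is $T(A,\boldsymbol{q})=\sum_{(K,(a,b,c))\in A}\phi_K(q_a,q_b,q_c)$, where each kernel cost has one of the forms, with positive kernel-specific constants: Type I $\beta abc$; Type IIa $\beta_1a^3+\beta_2a^2c$; Type IIb $\beta_1c^3+\beta_2c^2a$. Type II kernels are exactly the solves with a non-triangular coefficient matrix and general right-hand side (GEGESV: $\beta_1=2/3,\beta_2=2$; SYGESV, POGESV: $\beta_1=1/3,\beta_2=2$), IIa with the coefficient on the left ($a=b$), IIb on the right ($b=c$); all other kernels are Type I. Fanning-out variant $E^h$ ($h\in\{0,\ldots,n\}$): the variant of $(M_1(\cdots(M_{h-1}M_h)\cdots))((\cdots(M_{h+1}M_{h+2})\cdots)M_n)$, computing the prefix $M_1\cdots M_h$ right-to-left, the suffix $M_{h+1}\cdots M_n$ left-to-right, then associating the two results. Penalty: for $\mathcal{Z}\subseteq\mathcal{A}$ nonempty, $P(\mathcal{Z},\boldsymbol{q})=\frac{\min_{Z\in\mathcal{Z}}T(Z,\boldsymbol{q})}{\min_{A\in\mathcal{A}}T(A,\boldsymbol{q})}-1$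 (with $P(\emptyset,\boldsymbol{q})=\infty$), and total penalty $P(\mathcal{Z})=\sup_{\boldsymbol{q}}P(\mathcal{Z},\boldsymbol{q})$ over all instances. *)

From mathcomp Require Import all_boot all_order all_algebra.
Set Implicit Arguments. Unset Strict Implicit. Unset Printing Implicit Defensive.
Import Order.TTheory GRing.Theory Num.Theory.
Local Open Scope ring_scope.

Inductive structure := General | Symmetric | Lower | Upper.
Inductive property := Singular | Invertible | SPD | Orthogonal.
(* op(M) in {M, M^T, M^-1, M^-T}; transposition is ignored (only inversion matters). *)
Inductive mop := OpN | OpT | OpI | OpIT.

Record matrix_desc := MD { mstr : structure; mprop : property; mopr : mop }.

(* A symbolic GMC of n = size ch matrices; M_i (1 <= i <= n) has size q_{i-1} x q_i. *)
Definition chain := seq matrix_desc.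
Definition dflt_md := MD General Singular OpN.
Definition mat (ch : chain) (i : nat) : matrix_desc := nth dflt_md ch i.-1.

Definition inverted (o : mop) : bool :=
  match o with OpI | OpIT => true | _ => false end.
Definition is_general (s : structure) : bool :=
  match s with General => true | _ => false end.
Definition is_tri (s : structure) : bool :=
  match s with Lower | Upper => true | _ => false end.
Definition is_sym (s : structure) : bool :=
  match s with Symmetric => true | _ => false end.

Definition nec_square (m : matrix_desc) : bool :=
  ~~ is_general (mstr m) || inverted (mopr m).

(* The equivalence relation generated by q_{i-1} ~ q_i (M_i necessarily square).
   Since the generating links only join consecutive symbols, q_i and q_j are
   equivalent iff every matrix M_k with min(i,j) < k <= max(i,j) is necessarily
   square. *)
Definition same_class (ch : chain) (i j : nat) : bool :=
  all (fun k => nec_square (mat ch k)) (iota (minn i j).+1 (maxn i j - minn i j)).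

Definition instance (ch : chain) (q : nat -> nat) : Prop :=
  (forall i, (i <= size ch)%N -> (0 < q i)%N) /\
  (forall i j, (i <= size ch)%N -> (j <= size ch)%N -> same_class ch i j -> q i = q j).

Inductive kname :=
  GEMM | SYMM | TRMM | SYSYMM | TRSYMM | TRTRMM
| GEGESV | GESYSV | GETRSV | SYGESV | SYSYSV | SYTRSV
| POGESV | POSYSV | POTRSV | TRSM | TRSYSV | TRTRSV.

(* kleft: for a solve, whether the (inverted) coefficient matrix is the left operand *)
Record kernel := Kernel { kn : kname; kleft : bool }.

Section Cost.
Variable R : realFieldType.

Definition phi (betaI : kname -> R) (K : kernel) (x y z : R) : R :=
  let typeII (b1 b2 : R) :=
    if kleft K then b1 * x ^+ 3 + b2 * x ^+ 2 * z
    else b1 * z ^+ 3 + b2 * z ^+ 2 * x in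
  match kn K with
  | GEGESV => typeII (2%:R / 3%:R) 2%:R
  | SYGESV | POGESV => typeII (1 / 3%:R) 2%:R
  | k => betaI k * x * y * z
  end.
End Cost.

Record feat := Feat { fstr : structure; fprop : property; finv : bool }.

Definition nonsing (p : property) : bool :=
  match p with Singular => false | _ => true end.
Definition is_orth (p : property) : bool :=
  match p with Orthogonal => true | _ => false end.
Definition is_spd (p : property) : bool :=
  match p with SPD => true | _ => false end.

Definition prodK (s1 s2 : structure) : kname :=
  if is_tri s1 && is_tri s2 then TRTRMM
  else if (is_tri s1 && is_sym s2) || (is_sym s1 && is_tri s2) then TRSYMM
  else if is_sym s1 && is_sym s2 then SYSYMM
  else if is_tri s1 || is_tri s2 then TRMM
  else if is_sym s1 || is_sym s2 then SYMM
  else GEMM.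

Definition solveK (coef : feat) (rhs : structure) : kname :=
  match fstr coef with
  | General =>
      if is_tri rhs then GETRSV else if is_sym rhs then GESYSV else GEGESV
  | Symmetric =>
      if is_spd (fprop coef) then
        (if is_tri rhs then POTRSV else if is_sym rhs then POSYSV else POGESV)
      else (if is_tri rhs then SYTRSV else if is_sym rhs then SYSYSV else SYGESV)
  | Lower | Upper =>
      if is_tri rhs then TRTRSV else if is_sym rhs then TRSYSV else TRSM
  end.

Definition res_str (s1 s2 : structure) : structure :=
  match s1, s2 with
  | Lower, Lower => Lower
  | Upper, Upper => Upper
  | _, _ => General
  end.

Definition res_prop (sq : bool) (p1 p2 : property) : property :=
  if ~~ sq then Singular
  else if ~~ nonsing p1 || ~~ nonsing p2 then Singular
  else if is_orth p1 && is_orth p2 then Orthogonal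
  else Invertible.

(* One association of X (sizes q_a x q_b) with Y (sizes q_b x q_c):
   kernel used and features of the result. *)
Definition combine (ch : chain) (a b c : nat) (X Y : feat) : kernel * feat :=
  let sqX := same_class ch a b in
  let sqY := same_class ch b c in
  let sqR := same_class ch a c in
  let gs (Z : feat) := is_general (fstr Z) || is_sym (fstr Z) in
  let orthsq (Z : feat) (sqZ : bool) := is_orth (fprop Z) && sqZ in
  let partner_ok (Z : feat) (sqZ : bool) :=
    orthsq Z sqZ || (is_tri (fstr Z) && nonsing (fprop Z)) in
  let rf (inv : bool) := Feat (res_str (fstr X) (fstr Y))
                              (res_prop sqR (fprop X) (fprop Y)) inv in
  if finv X && finv Y then
    (* X^-1 Y^-1 = (Y X)^-1 *)
    (Kernel (prodK (fstr Y) (fstr X)) true, rf true)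
  else if finv X && gs X && partner_ok Y sqY then
    (* X^-1 Q = (Q^T X)^-1 ;  X^-1 T = (T^-1 X)^-1 *)
    (if orthsq Y sqY then Kernel (prodK (fstr Y) (fstr X)) true
     else Kernel (solveK Y (fstr X)) true, rf true)
  else if finv Y && gs Y && partner_ok X sqX then
    (* Q Y^-1 = (Y Q^T)^-1 ;  T Y^-1 = (Y T^-1)^-1 *)
    (if orthsq X sqX then Kernel (prodK (fstr Y) (fstr X)) true
     else Kernel (solveK X (fstr Y)) false, rf true)
  else if finv X then (Kernel (solveK X (fstr Y)) true, rf false)
  else if finv Y then (Kernel (solveK Y (fstr X)) false, rf false)
  else (Kernel (prodK (fstr X) (fstr Y)) true, rf false).

Inductive tree := Leaf | Node of tree & tree.

Definition variant := seq (kernel * (nat * nat * nat)).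

(* build t a: the subtree t multiplies M_{a+1} ... M_c; returns c, the
   features of the result and its associations, leftmost association first. *)
Fixpoint build (ch : chain) (t : tree) (a : nat) : nat * feat * variant :=
  match t with
  | Leaf => let m := mat ch a.+1 in
            (a.+1, Feat (mstr m) (mprop m) (inverted (mopr m)), [::])
  | Node l r =>
      let '(b, fl, vl) := build ch l a in
      let '(c, fr, vr) := build ch r b in
      let '(K, f) := combine ch a b c fl fr in
      (c, f, vl ++ vr ++ [:: (K, (a, b, c))])
  end.

Definition variant_of (ch : chain) (t : tree) : variant := (build ch t 0).2.

Fixpoint trees_fuel (fuel k : nat) : seq tree :=
  match fuel with
  | 0 => [::]
  | fuel'.+1 =>
      if k == 1%N then [:: Leaf]
      else flatten [seq [seq Node l r | l <- trees_fuel fuel' i,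
                                        r <- trees_fuel fuel' (k - i)]
                   | i <- iota 1 k.-1]
  end.
Definition trees (k : nat) : seq tree := trees_fuel k k.

Definition all_variants (ch : chain) : seq variant :=
  [seq variant_of ch t | t <- trees (size ch)].

Fixpoint rcomb (k : nat) : tree :=
  match k with
  | 0 | 1 => Leaf
  | k'.+1 => Node Leaf (rcomb k')
  end.
Fixpoint lcomb (k : nat) : tree :=
  match k with
  | 0 | 1 => Leaf
  | k'.+1 => Node (lcomb k') Leaf
  end.
Definition fan_tree (n h : nat) : tree :=
  if h == 0%N then lcomb n
  else if h == n then rcomb n
  else Node (rcomb h) (lcomb (n - h)).

Definition fan_variant (ch : chain) (h : nat) : variant :=
  variant_of ch (fan_tree (size ch) h).

Section Penalty.
Variable R : realFieldType.

Definition cost (betaI : kname -> R) (v : variant) (q : nat -> nat) : R :=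
  \sum_(x <- v) phi betaI x.1 (q x.2.1.1)%:R (q x.2.1.2)%:R (q x.2.2)%:R.

Definition minR (s : seq R) : R :=
  match s with [::] => 0 | x :: s' => foldr Num.min x s' end.

(* P(Z, q) for nonempty Z *)
Definition penalty (betaI : kname -> R) (ch : chain) (Z : seq variant)
    (q : nat -> nat) : R :=
  minR [seq cost betaI z q | z <- Z] /
  minR [seq cost betaI A q | A <- all_variants ch] - 1.

(* P(Z) = sup_q P(Z, q) < oo  (P(empty) = oo) *)
Definition finite_total_penalty (betaI : kname -> R) (ch : chain)
    (Z : seq variant) : Prop :=
  Z <> [::] /\
  exists B : R, forall q : nat -> nat, instance ch q -> penalty betaI ch Z q <= B.
End Penalty.

From HB Require Import structures.
From mathcomp Require Import all_boot all_order all_algebra.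
From mathcomp Require Import ring lra zify.

(* Up to the constants [beta_lo] and [beta_hi], a variant costs its work: the sum over
   its associations (a, b, c) of q_a q_b q_c, plus q_a^3 or q_c^3 for a Type-II solve.
   Let q_m be the smallest size and U := q_m (sum_j q_j q_(j+1) + q_0 q_n) + the sum of
   q_i^3 over the inverted general or symmetric M_i.  Every M_i is an operand of some
   association, whose work is at least q_m q_(i-1) q_i and, when M_i is inverted general
   or symmetric, at least q_i^3; the root association has work at least q_m q_0 q_n.
   Hence every variant has work at least U / (2n + 1).  Conversely E^h with q_h = q_m
   belongs to E_s, and each of its n - 1 associations touches h, so has work at most 2U.
   The penalty is thus at most 2n (2n + 1) beta_hi / beta_lo. *)

Set Implicit Arguments.
Unset Strict Implicit.
Unset Printing Implicit Defensive.
Import Order.TTheory GRing.Theory Num.Theory.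

Definition typeII (K : kernel) : bool :=
  match kn K with GEGESV | SYGESV | POGESV => true | _ => false end.

Definition inv_gs (X : feat) : bool :=
  finv X && (is_general (fstr X) || is_sym (fstr X)).

Definition forces_square (X : feat) : bool := ~~ is_general (fstr X) || finv X.

(* [sq] tells whether the two size symbols of the operand [X] are in the same class. *)
Definition square_operand (X : feat) (sq : bool) : bool :=
  forces_square X || is_orth (fprop X) && sq.

Definition combine_spec (X Y : feat) (sqX sqY : bool) (Kf : kernel * feat) : bool :=
  let K := Kf.1 in
  [&& typeII K ==> (if kleft K then inv_gs X else inv_gs Y),
      inv_gs X ==> typeII K && kleft K || square_operand Y sqY,
      inv_gs Y ==> typeII K && ~~ kleft K || square_operand X sqX &
      forces_square Kf.2 ==> square_operand X sqX && square_operand Y sqY].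

Lemma combine_sound ch a b c X Y :
  combine_spec X Y (same_class ch a b) (same_class ch b c) (combine ch a b c X Y).
Proof.
rewrite /combine; case: (same_class ch a b); case: (same_class ch b c);
by case: X => [[] [] []]; case: Y => [[] [] []]; vm_compute.
Qed.

Definition kernel_work (K : kernel) (x y z : nat) : nat :=
  x * y * z + (if typeII K then (if kleft K then x ^ 3 else z ^ 3) else 0).

Lemma kernel_work_ge_prod K x y z : x * y * z <= kernel_work K x y z.
Proof. exact: leq_addr. Qed.

Lemma kernel_work_ge_cube K x y z : typeII K ->
  (if kleft K then x ^ 3 else z ^ 3) <= kernel_work K x y z.
Proof. by rewrite /kernel_work => ->; apply: leq_addl. Qed.

Lemma inv_gs_forces_square X : inv_gs X -> forces_square X.
Proof. by case/andP => fX _; rewrite /forces_square fX orbT. Qed.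

Scheme Equality for kname.
HB.instance Definition _ := hasDecEq.Build kname
  (fun k k' => iffP idP (@internal_kname_dec_bl k k') (@internal_kname_dec_lb k k')).

Definition knames : seq kname := [:: GEMM; SYMM; TRMM; SYSYMM; TRSYMM; TRTRMM;
  GEGESV; GESYSV; GETRSV; SYGESV; SYSYSV; SYTRSV; POGESV; POSYSV; POTRSV;
  TRSM; TRSYSV; TRTRSV].

Lemma mem_knames k : k \in knames.
Proof. by case: k. Qed.

Section KernelCost.
Variables (R : realFieldType) (betaI : kname -> R).
Local Open Scope ring_scope.
Hypothesis betaI_gt0 : forall k, 0 < betaI k.

Definition beta_lo : R := \big[Num.min/(1 / 3%:R)]_(k <- knames) betaI k.
Definition beta_hi : R := \big[Num.max/2%:R]_(k <- knames) betaI k.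

Lemma beta_lo_gt0 : 0 < beta_lo.
Proof. by apply: lt_bigmin => [|k _]; rewrite ?divr_gt0. Qed.

Lemma beta_lo_le k : beta_lo <= betaI k.
Proof. exact: ge_bigmin_seq (mem_knames k) _. Qed.

Lemma beta_hi_ge k : betaI k <= beta_hi.
Proof. exact: le_bigmax_seq (mem_knames k) _. Qed.

Lemma beta_lo_le_third : beta_lo <= 1 / 3%:R.
Proof. exact: bigmin_le_id. Qed.

Lemma beta_hi_ge_two : 2%:R <= beta_hi.
Proof. exact: bigmax_ge_id. Qed.

Lemma typeII_cost_sandwich (b1 b2 u w : R) : 0 <= u -> 0 <= w ->
    beta_lo <= b1 -> beta_lo <= b2 -> b1 <= beta_hi -> b2 <= beta_hi ->
  beta_lo * (u * u * w + u ^+ 3) <= b1 * u ^+ 3 + b2 * u ^+ 2 * w <=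
  beta_hi * (u * u * w + u ^+ 3).
Proof.
move=> u0 w0 lo1 lo2 hi1 hi2.
have p0 : 0 <= u ^+ 2 * w by rewrite mulr_ge0 ?exprn_ge0.
have c0 : 0 <= u ^+ 3 by rewrite exprn_ge0.
rewrite -expr2 -mulrA !mulrDr !(addrC (_ * (u ^+ 2 * w))).
by rewrite !lerD ?ler_wpM2r.
Qed.

Lemma phi_sandwich K (x y z : nat) :
    (typeII K -> if kleft K then x = y else y = z) ->
  beta_lo * (kernel_work K x y z)%:R <= phi betaI K x%:R y%:R z%:R <=
  beta_hi * (kernel_work K x y z)%:R.
Proof.
move=> coef; rewrite /kernel_work /phi natrD !natrM.
have [lo_third hi_two] := (beta_lo_le_third, beta_hi_ge_two).
have xyz0 : 0 <= x%:R * (y%:R * z%:R) :> R by rewrite !mulr_ge0 ?ler0n.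
case: K coef => [[] [|]] /= coef; rewrite ?natrX;
  try by rewrite addr0 -!mulrA !ler_wpM2r ?beta_lo_le ?beta_hi_ge.
all: rewrite (coef isT); try rewrite -[x%:R * _ * _]mulrA [x%:R * _]mulrC.
all: by apply: typeII_cost_sandwich; rewrite ?ler0n //; lra.
Qed.

End KernelCost.

Fixpoint leaves (t : tree) : nat :=
  if t is Node l r then leaves l + leaves r else 1.

Lemma leaves_gt0 t : 0 < leaves t.
Proof. by elim: t => //= l IHl r IHr; rewrite addn_gt0 IHl. Qed.

Lemma leaves_eq1 t : leaves t = 1 -> t = Leaf.
Proof. by case: t => //= l r; have := leaves_gt0 l; have := leaves_gt0 r; lia. Qed.

Lemma leaves_rcomb k : 0 < k -> leaves (rcomb k) = k.
Proof. by elim: k => // -[|k] IH _ //=; rewrite IH. Qed.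

Lemma leaves_lcomb k : 0 < k -> leaves (lcomb k) = k.
Proof. by elim: k => // -[|k] IH _ //=; rewrite IH ?addn1. Qed.

Lemma leaves_fan n h : 0 < n -> h <= n -> leaves (fan_tree n h) = n.
Proof.
move=> n0 hn; rewrite /fan_tree; case: eqP => [_|h0]; first exact: leaves_lcomb.
case: eqP => [_|hn']; first exact: leaves_rcomb.
by rewrite /= leaves_rcomb ?leaves_lcomb; lia.
Qed.

Lemma all_flatten (T : Type) (P : pred T) (ss : seq (seq T)) :
  all P (flatten ss) = all (all P) ss.
Proof. by elim: ss => //= s ss IH; rewrite all_cat IH. Qed.

Lemma trees_fuel_leaves fuel k : all (fun t => leaves t == k) (trees_fuel fuel k).
Proof.
elim: fuel k => [|fuel IH] k //=; case: eqP => [->|_] //.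
rewrite all_flatten all_map; apply/allP => i /[!mem_iota] /andP[i1 ik] /=.
rewrite all_flatten all_map; apply: sub_all (IH i) => l /eqP li /=.
by rewrite all_map; apply: sub_all (IH (k - i)) => r /eqP ri /=; rewrite li ri subnKC //; lia.
Qed.

Section Build.
Variable ch : chain.

Definition leaf_feat (i : nat) : feat :=
  Feat (mstr (mat ch i)) (mprop (mat ch i)) (inverted (mopr (mat ch i))).
Definition result_feat (t : tree) (a : nat) : feat := (build ch t a).1.2.
Definition assocs (t : tree) (a : nat) : variant := (build ch t a).2.

Lemma build_end t a : (build ch t a).1.1 = a + leaves t.
Proof.
elim: t a => [|l IHl r IHr] a /=; first by rewrite addn1.
move: (IHl a); case: (build ch l a) => [[b fl] vl] /= ->.
move: (IHr (a + leaves l)); case: (build ch r _) => [[c fr] vr] /= ->.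
by case: combine => K f; rewrite addnA.
Qed.

Lemma build_Node l r a : let b := a + leaves l in let c := b + leaves r in
  let Kf := combine ch a b c (result_feat l a) (result_feat r b) in
  build ch (Node l r) a = (c, Kf.2, assocs l a ++ assocs r b ++ [:: (Kf.1, (a, b, c))]).
Proof.
rewrite /result_feat /assocs /=; move: (build_end l a) (build_end r (a + leaves l)).
case: (build ch l a) => [[b fl] vl] /= ->.
by case: (build ch r _) => [[c fr] vr] /= ->; case: combine.
Qed.

Lemma size_assocs t a : size (assocs t a) = (leaves t).-1.
Proof.
elim: t a => [|l IHl r IHr] a //; rewrite {1}/assocs build_Node /= !size_cat IHl IHr /=.
by have := leaves_gt0 l; have := leaves_gt0 r; lia.
Qed.

Lemma rcomb_shape k a :
  all (fun '(_, (a', b, c)) => (b == a'.+1) && (c == a + k)) (assocs (rcomb k) a).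
Proof.
elim: k a => [|[|k] IH] a //; rewrite {1}/assocs build_Node /= -/(rcomb k.+1).
by rewrite all_cat addn1 -addSnnS IH leaves_rcomb //= !eqxx.
Qed.

Lemma lcomb_shape k a :
  all (fun '(_, (a', b, c)) => (a' == a) && (c == b.+1)) (assocs (lcomb k) a).
Proof.
elim: k => [|[|k] IH] //; rewrite {1}/assocs build_Node /= -/(lcomb k.+1).
by rewrite all_cat IH /= addn1 !eqxx.
Qed.

Definition fan_shape (n h : nat) (x : kernel * (nat * nat * nat)) : bool :=
  let '(_, (a, b, c)) := x in
  [|| (a == h) && (c == b.+1), (c == h) && (b == a.+1) | [&& a == 0, b == h & c == n]].

Lemma fan_variant_shape h : h <= size ch ->
  all (fan_shape (size ch) h) (fan_variant ch h).
Proof.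
move=> hn; rewrite /fan_variant /variant_of -/(assocs _ _) /fan_tree.
have from_lcomb k a : a = h -> all (fan_shape (size ch) h) (assocs (lcomb k) a).
  move=> ->; apply: sub_all (lcomb_shape _ _) => -[K [[a' b] c]] /andP[/eqP-> cb] /=.
  by rewrite eqxx cb.
have from_rcomb k : k = h -> all (fan_shape (size ch) h) (assocs (rcomb k) 0).
  move=> ->; apply: sub_all (rcomb_shape _ 0) => -[K [[a b] c]] /andP[ba /eqP->] /=.
  by rewrite ba eqxx orbT.
case: eqP => [h0|h0]; first exact: from_lcomb.
case: eqP => [hn'|hn']; first exact: from_rcomb.
rewrite {1}/assocs build_Node /= !all_cat leaves_rcomb; last by lia.
rewrite from_rcomb ?from_lcomb //= leaves_lcomb ?subnKC ?eqxx ?orbT //; lia.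
Qed.
End Build.

Lemma has_leq_sum (I : Type) (r : seq I) (F : I -> nat) c :
  has (fun i => c <= F i) r -> c <= \sum_(i <- r) F i.
Proof.
elim: r => [|i r IH] //=; rewrite big_cons => /orP[ci | /IH cr].
  exact: leq_trans ci (leq_addr _ _).
exact: leq_trans cr (leq_addl _ _).
Qed.

Lemma exists_argmin (F : nat -> nat) n :
  exists2 m, m <= n & forall j, j <= n -> F m <= F j.
Proof.
case: (@arg_minnP _ (ord0 : 'I_n.+1) xpredT (fun i => F i) isT) => i _ imin.
by exists i => [|j jn]; [rewrite -ltnS | apply: (imin (Ordinal (jn : j < n.+1)))].
Qed.

Lemma sum_leq_size_mul (I : Type) (r : seq I) (F : I -> nat) c :
  all (fun i => F i <= c) r -> \sum_(i <- r) F i <= size r * c.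
Proof.
elim: r => [|i r IH] /=; first by rewrite big_nil.
by rewrite big_cons mulSn => /andP[Fi /IH]; apply: leq_add.
Qed.

Section Instance.
Variables (ch : chain) (q : nat -> nat).
Hypothesis q_inst : instance ch q.
Local Notation n := (size ch).

Lemma same_class_succ a : same_class ch a a.+1 = forces_square (leaf_feat ch a.+1).
Proof.
by rewrite /same_class (minn_idPl (leqnSn a)) (maxn_idPr (leqnSn a)) subSnn /= andbT.
Qed.

Lemma square_operand_eq X a b :
  (forces_square X -> q a = q b) -> square_operand X (same_class ch a b) ->
  a <= n -> b <= n -> q a = q b.
Proof. by move=> sqX /orP[/sqX //|/andP[_ ab] an bn]; apply: q_inst.2. Qed.

Lemma result_square t a : a + leaves t <= n ->
  forces_square (result_feat ch t a) -> q a = q (a + leaves t).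
Proof.
elim: t a => [|l IHl r IHr] a /= tn.
  by rewrite addn1 in tn *; rewrite -same_class_succ => /(q_inst.2 _ _ (ltnW tn) tn).
have := leaves_gt0 l; have := leaves_gt0 r => r0 l0.
rewrite {1}/result_feat build_Node /= addnA.
set b := a + leaves l; set c := b + leaves r.
case/and4P: (combine_sound ch a b c (result_feat ch l a) (result_feat ch r b)) => _ _ _ sq.
move=> /(implyP sq) /andP[sqX sqY].
have [ln cn] : b <= n /\ c <= n by lia.
by rewrite (square_operand_eq (IHl a _) sqX) ?(square_operand_eq (IHr b _) sqY) //; lia.
Qed.

Lemma combine_work_ge_cube a b c X Y :
    (forces_square X -> q a = q b) -> (forces_square Y -> q b = q c) ->
    a <= n -> b <= n -> c <= n -> inv_gs X || inv_gs Y ->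
  q b ^ 3 <= kernel_work (combine ch a b c X Y).1 (q a) (q b) (q c).
Proof.
move=> sqX sqY an bn cn.
case/and4P: (combine_sound ch a b c X Y) => _ FX FY _.
have cube_prod : q a = q b -> q b = q c -> q b ^ 3 <= kernel_work
    (combine ch a b c X Y).1 (q a) (q b) (q c).
  move=> eab ebc; apply: leq_trans (kernel_work_ge_prod _ _ _ _).
  by rewrite eab -ebc !expnS muln1 mulnA.
case/orP => [gX | gY].
- have eab := sqX (inv_gs_forces_square gX).
  case/orP: (implyP FX gX) => [/andP[tK lK] | /square_operand_eq sY].
    by have := kernel_work_ge_cube (q a) (q b) (q c) tK; rewrite lK eab.
  exact: cube_prod (sY sqY bn cn).
- have ebc := sqY (inv_gs_forces_square gY).
  case/orP: (implyP FY gY) => [/andP[tK lK] | /square_operand_eq sX].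
    by have := kernel_work_ge_cube (q a) (q b) (q c) tK; rewrite (negbTE lK) ebc.
  exact: cube_prod (sX sqX an bn) ebc.
Qed.

Definition assoc_wf (x : kernel * (nat * nat * nat)) : bool :=
  let '(K, (a, b, c)) := x in
  [&& a < b, b < c, c <= n &
      typeII K ==> if kleft K
                   then (q a == q b) && ((b == a.+1) ==> inv_gs (leaf_feat ch b))
                   else (q b == q c) && ((c == b.+1) ==> inv_gs (leaf_feat ch c))].

Lemma assocs_wf t a : a + leaves t <= n -> all assoc_wf (assocs ch t a).
Proof.
elim: t a => [|l IHl r IHr] a //= tn.
have := leaves_gt0 l; have := leaves_gt0 r => r0 l0.
rewrite {1}/assocs build_Node /= !all_cat IHl ?IHr /= ?andbT; try lia.
set b := a + leaves l; set c := b + leaves r.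
case/and4P: (combine_sound ch a b c (result_feat ch l a) (result_feat ch r b)) => coef _ _ _.
apply/and4P; split; try lia.
apply/implyP => tK; move: (implyP coef tK); case: (kleft _) => gs.
- rewrite (result_square _ (inv_gs_forces_square gs)) ?eqxx /=; last by lia.
  apply/implyP => /eqP ba; have /leaves_eq1 el : leaves l = 1 by lia.
  by move: gs; rewrite /b el addn1.
- rewrite (result_square _ (inv_gs_forces_square gs)) ?eqxx /=; last by lia.
  apply/implyP => /eqP cb; have /leaves_eq1 er : leaves r = 1 by lia.
  by move: gs; rewrite /c er addn1.
Qed.

Definition assoc_work (x : kernel * (nat * nat * nat)) : nat :=
  let '(K, (a, b, c)) := x in kernel_work K (q a) (q b) (q c).

Variable m : nat.
Hypothesis q_min : forall j, j <= n -> q m <= q j.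

Lemma assocs_consume t a i : a + leaves t <= n -> 1 < leaves t -> a < i <= a + leaves t ->
  has (fun x => (q m * (q i.-1 * q i) <= assoc_work x) &&
                (inv_gs (leaf_feat ch i) ==> (q i ^ 3 <= assoc_work x)))
      (assocs ch t a).
Proof.
elim: t a => [|l IHl r IHr] a //= tn _ ai.
have := leaves_gt0 l; have := leaves_gt0 r => r0 l0.
rewrite {1}/assocs build_Node /= !has_cat /= orbF.
set b := a + leaves l; set c := b + leaves r.
have sqX : forces_square (result_feat ch l a) -> q a = q b by apply: result_square; lia.
have sqY : forces_square (result_feat ch r b) -> q b = q c by apply: result_square; lia.
have := combine_work_ge_cube sqX sqY; have := kernel_work_ge_prod.
move: (combine _ _ _ _ _ _) => [K f] /= /(_ K (q a) (q b) (q c)) prod.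
have [an bn cn] : [/\ a <= n, b <= n & c <= n] by split; lia.
move=> /(_ an bn cn) cube.
case: (leqP i b) => ib.
  case: (ltnP 1 (leaves l)) => l1; first by rewrite IHl //; lia.
  have l_1 : leaves l = 1 by lia.
  have X_leaf : result_feat ch l a = leaf_feat ch b by rewrite /b l_1 (leaves_eq1 l_1) addn1.
  have -> : i = b by rewrite /b; lia.
  have -> : b.-1 = a by rewrite /b; lia.
  apply/or3P/Or33/andP; split.
    by apply: leq_trans prod; rewrite mulnC leq_mul2l q_min ?orbT.
  by apply/implyP; rewrite -X_leaf => gX; apply: cube; rewrite gX.
case: (ltnP 1 (leaves r)) => r1; first by rewrite IHr ?orbT //; lia.
have r_1 : leaves r = 1 by lia.
have Y_leaf : result_feat ch r b = leaf_feat ch c by rewrite /c r_1 (leaves_eq1 r_1) addn1.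
have -> : i = c by rewrite /c; lia.
have -> : c.-1 = b by rewrite /c; lia.
apply/or3P/Or33/andP; split.
  by apply: leq_trans prod; rewrite mulnA !leq_mul2r q_min ?orbT.
apply/implyP; rewrite -Y_leaf => gY.
by rewrite -{1}(sqY (inv_gs_forces_square gY)); apply: cube; rewrite gY orbT.
Qed.

Lemma assocs_root t a : a + leaves t <= n -> 1 < leaves t ->
  has (fun x => q m * (q a * q (a + leaves t)) <= assoc_work x) (assocs ch t a).
Proof.
case: t => //= l r tn _; rewrite {1}/assocs build_Node /= !has_cat /= orbF addnA.
apply/or3P/Or33; apply: leq_trans (kernel_work_ge_prod _ _ _ _).
by rewrite mulnCA -mulnA leq_mul2l leq_mul2r q_min ?orbT //; lia.
Qed.

Definition pair_sum : nat := \sum_(j < n) q j * q j.+1 + q 0 * q n.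
Definition cube_sum : nat := \sum_(j < n | inv_gs (leaf_feat ch j.+1)) q j.+1 ^ 3.
Definition work_scale : nat := q m * pair_sum + cube_sum.
Definition variant_work (v : variant) : nat := \sum_(x <- v) assoc_work x.

Lemma work_scale_le_variant t : leaves t = n -> 1 < n ->
  work_scale <= (n.*2).+1 * variant_work (assocs ch t 0).
Proof.
move=> tn n1; set W := variant_work _.
have consume (j : 'I_n) : q m * (q j * q j.+1) +
    (if inv_gs (leaf_feat ch j.+1) then q j.+1 ^ 3 else 0) <= W.*2.
  have := @assocs_consume t 0 j.+1; rewrite add0n tn => /(_ (leqnn n) n1).
  rewrite ltn_ord => /(_ isT) has_j; rewrite -addnn leq_add //.
    by apply: has_leq_sum; apply: sub_has has_j => x /andP[].
  case: ifP => // gj; apply: has_leq_sum; apply: sub_has has_j.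
  by move=> x /andP[_ /implyP/(_ gj)].
have top : q m * (q 0 * q n) <= W.
  by apply: has_leq_sum; have := @assocs_root t 0; rewrite add0n tn; apply.
rewrite /work_scale /pair_sum /cube_sum mulnDr big_distrr addnAC.
rewrite [X in _ + X + _]big_mkcond -big_split /=.
apply: (@leq_trans (\sum_(j < n) W.*2 + W)).
  by apply: leq_add top; apply: leq_sum => j _; apply: consume.
by rewrite sum_nat_const card_ord; lia.
Qed.

Lemma pair_le_sum j : j < n -> q j * q j.+1 <= pair_sum.
Proof. by move=> jn; rewrite /pair_sum (bigD1 (Ordinal jn)) //= -addnA leq_addr. Qed.

Lemma ends_le_sum : q 0 * q n <= pair_sum.
Proof. exact: leq_addl. Qed.

Lemma leaf_cube_le j : j < n -> inv_gs (leaf_feat ch j.+1) -> q j.+1 ^ 3 <= cube_sum.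
Proof. by move=> jn gj; rewrite /cube_sum (bigD1 (Ordinal jn)) //= leq_addr. Qed.

Lemma min_cube_le : q m ^ 3 <= work_scale.
Proof.
apply: leq_trans (leq_addr _ _); rewrite expnS leq_mul2l.
apply/orP; right; apply: leq_trans ends_le_sum.
by rewrite expnS expn1; apply: leq_mul; apply: q_min.
Qed.

Lemma variant_of_wf t : leaves t = n -> all assoc_wf (variant_of ch t).
Proof. by move=> tn; apply: assocs_wf; rewrite add0n tn. Qed.

Lemma work_scale_gt0 : m <= n -> 0 < work_scale.
Proof.
move=> mn; have pos j : j <= n -> 0 < q j by apply: q_inst.1.
by rewrite ltn_addr // muln_gt0 pos // ltn_addl // muln_gt0 !pos.
Qed.

Variable h : nat.
Hypotheses (h_n : h <= n) (q_h : q h = q m).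

Lemma fan_assoc_work_le x : assoc_wf x -> fan_shape n h x -> assoc_work x <= work_scale.*2.
Proof.
case: x => K [[a b] c] /and4P[ab bc cn coef] shape; rewrite /= /kernel_work -addnn.
apply: leq_add.
  apply: leq_trans (leq_addr cube_sum _) ; rewrite -q_h.
  case/or3P: shape => [/andP[/eqP-> /eqP->] | /andP[/eqP-> /eqP->] |
                       /and3P[/eqP-> /eqP-> /eqP->]].
  - by rewrite -mulnA leq_mul2l pair_le_sum ?orbT //; lia.
  - by rewrite mulnC leq_mul2l pair_le_sum ?orbT //; lia.
  - by rewrite mulnAC mulnC leq_mul2l ends_le_sum orbT.
case: (typeII K) coef => //=; case: (kleft K) => /andP[/eqP eq_coef /implyP leaf].
- case/or3P: shape => [/andP[/eqP ah _] | /andP[_ /eqP ba] | /and3P[_ /eqP bh _]].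
  + by rewrite ah q_h min_cube_le.
  + rewrite eq_coef ba; apply: leq_trans (leq_addl _ _); apply: leaf_cube_le; first lia.
    by rewrite -ba; apply/leaf/eqP.
  + by rewrite eq_coef bh q_h min_cube_le.
- case/or3P: shape => [/andP[_ /eqP cb] | /andP[/eqP c_h _] | /and3P[_ /eqP bh _]].
  + rewrite cb; apply: leq_trans (leq_addl _ _); apply: leaf_cube_le; first lia.
    by rewrite -cb; apply/leaf/eqP.
  + by rewrite c_h q_h min_cube_le.
  + by rewrite -eq_coef bh q_h min_cube_le.
Qed.

Lemma fan_work_le : 0 < n -> variant_work (fan_variant ch h) <= n * work_scale.*2.
Proof.
move=> n0; have fan_leaves := leaves_fan n0 h_n.
have wf_shape : all (predI assoc_wf (fan_shape n h)) (fan_variant ch h).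
  by rewrite all_predI fan_variant_shape // andbT variant_of_wf.
have le2U : all (fun x => assoc_work x <= work_scale.*2) (fan_variant ch h).
  by apply: sub_all wf_shape => x /andP[]; apply: fan_assoc_work_le.
apply: leq_trans (sum_leq_size_mul le2U) _; rewrite leq_mul2r.
by rewrite /fan_variant /variant_of -/(assocs _ _ _) size_assocs fan_leaves leq_pred orbT.
Qed.
End Instance.

Section Penalty.
Variables (R : realFieldType) (betaI : kname -> R).
Local Open Scope ring_scope.
Hypothesis betaI_gt0 : forall k, 0 < betaI k.

Lemma minR_le (s : seq R) y : y \in s -> minR s <= y.
Proof.
case: s => // x s; rewrite inE /= foldrE => /predU1P[-> | ys].
  exact: bigmin_le_id.
exact: ge_bigmin_seq ys _.
Qed.

Lemma minR_ge (s : seq R) lb :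
  s != [::] -> all (fun y => lb <= y) s -> lb <= minR s.
Proof.
case: s => // x s _ /= /andP[lbx lbs]; rewrite foldrE big_seq.
by apply: le_bigmin => // y ys; apply: (allP lbs).
Qed.

Lemma div_sub1_le (x y z c : R) :
  0 < z -> z <= y -> x <= c * z -> 0 <= c -> x / y - 1 <= c.
Proof.
move=> z0 zy xcz c0; have y0 : 0 < y := lt_le_trans z0 zy.
rewrite lerBlDr; apply: (@le_trans _ _ c); last by rewrite lerDl.
by rewrite ler_pdivrMr //; apply: le_trans xcz _; apply: ler_wpM2l.
Qed.

Lemma cost_sandwich ch q v : all (assoc_wf ch q) v ->
  beta_lo betaI * (variant_work q v)%:R <= cost betaI v q <=
  beta_hi betaI * (variant_work q v)%:R.
Proof.
move=> wf; rewrite /cost /variant_work -(all_filterP wf) !big_filter natr_sum !mulr_sumr.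
have sandwich x : assoc_wf ch q x ->
    beta_lo betaI * (assoc_work q x)%:R
      <= phi betaI x.1 (q x.2.1.1)%:R (q x.2.1.2)%:R (q x.2.2)%:R
      <= beta_hi betaI * (assoc_work q x)%:R.
  case: x => K [[a b] c] /and4P[_ _ _ coef]; apply: phi_sandwich => // /(implyP coef).
  by case: kleft => /andP[/eqP].
by apply/andP; split; apply: ler_sum => x /sandwich /andP[].
Qed.

Lemma fan_cost_min_le ch sel q m : instance ch q -> (0 < size ch)%N ->
    (m <= size ch)%N -> (forall j, j <= size ch -> q m <= q j)%N ->
    (sel m <= size ch)%N -> q (sel m) = q m ->
  minR [seq cost betaI z q | z <- [seq fan_variant ch (sel j) | j <- iota 0 (size ch).+1]]
    <= beta_hi betaI * (size ch * (work_scale ch q m).*2)%:R.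
Proof.
move=> q_inst n0 mn q_min hn q_h; rewrite -map_comp.
have m_in : m \in iota 0 (size ch).+1 by rewrite mem_iota ltnS.
apply: le_trans (minR_le (map_f _ m_in)) _ => /=.
have fan_wf : all (assoc_wf ch q) (fan_variant ch (sel m)).
  by apply: variant_of_wf => //; apply: leaves_fan.
have /andP[_ cost_hi] := cost_sandwich fan_wf; apply: le_trans cost_hi _.
have hi0 : 0 <= beta_hi betaI by apply: le_trans (beta_hi_ge_two _); rewrite ler0n.
by rewrite ler_wpM2l // ler_nat fan_work_le.
Qed.

Lemma variants_cost_min_ge ch q m : instance ch q -> (1 < size ch)%N ->
    (forall j, j <= size ch -> q m <= q j)%N -> (0 < size (all_variants ch))%N ->
  beta_lo betaI * (work_scale ch q m)%:R / (size ch).*2.+1%:R <=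
    minR [seq cost betaI A q | A <- all_variants ch].
Proof.
move=> q_inst n1 q_min nonempty; apply: minR_ge; first by rewrite -size_eq0 size_map -lt0n.
rewrite all_map /all_variants all_map; apply: sub_all (trees_fuel_leaves _ _) => t /eqP tn /=.
have /andP[cost_lo _] := cost_sandwich (variant_of_wf q_inst tn).
rewrite ler_pdivrMr ?ltr0n //; apply: le_trans _ (ler_wpM2r (ler0n _ _) cost_lo).
by rewrite -mulrA -natrM ler_pM2l ?beta_lo_gt0 // ler_nat mulnC work_scale_le_variant.
Qed.

Lemma fan_penalty_le ch sel q : (1 < size ch)%N ->
    (forall j, j <= size ch -> sel j <= size ch /\ same_class ch (sel j) j)%N ->
    instance ch q ->
  penalty betaI ch [seq fan_variant ch (sel j) | j <- iota 0 (size ch).+1] q <=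
    beta_hi betaI / beta_lo betaI * ((size ch).*2 * (size ch).*2.+1)%:R.
Proof.
move=> n1 sel_ok q_inst; have [m mn q_min] := exists_argmin q (size ch).
have [hn sc] := sel_ok m mn; have q_h := q_inst.2 _ _ hn mn sc.
have lo0 := beta_lo_gt0 betaI_gt0.
have hi0 : 0 < beta_hi betaI by apply: lt_le_trans (beta_hi_ge_two betaI); rewrite ltr0n.
have c0 : 0 <= beta_hi betaI / beta_lo betaI * ((size ch).*2 * (size ch).*2.+1)%:R.
  by rewrite !mulr_ge0 ?invr_ge0 ?ler0n ?ltW.
rewrite /penalty; case: (posnP (size (all_variants ch))) => [/size0nil -> | nonempty].
  (* no variant at all: [minR [::] = 0] and the quotient is [x / 0 = 0] *)
  by rewrite invr0 mulr0 sub0r (le_trans _ c0) // lerN10.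
apply: div_sub1_le (variants_cost_min_ge q_inst _ q_min nonempty) _ c0; try lia.
  by rewrite !mulr_gt0 ?invr_gt0 ?ltr0n ?work_scale_gt0.
apply: le_trans (fan_cost_min_le q_inst _ mn q_min hn q_h) _; try lia.
rewrite le_eqVlt; apply/orP; left; apply/eqP.
rewrite -!muln2 !natrM; field.
by rewrite -natrM nat1r pnatr_eq0 (gt_eqF lo0).
Qed.
End Penalty.

Local Open Scope ring_scope.

Theorem theorem2 (R : realFieldType) (betaI : kname -> R) (ch : chain)
    (sel : nat -> nat) :
  (forall k, 0 < betaI k) ->
  (4 <= size ch)%N ->
  (forall j, (j <= size ch)%N -> (sel j <= size ch)%N /\ same_class ch (sel j) j) ->
  (forall i j, (i <= size ch)%N -> (j <= size ch)%N -> same_class ch i j ->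
     sel i = sel j) ->
  finite_total_penalty betaI ch [seq fan_variant ch (sel j) | j <- iota 0 (size ch).+1].
Proof.
(* Choosing a single index per class only shrinks E_s; finiteness does not need it. *)
move=> betaI_gt0 n4 sel_ok _; split; first by [].
exists (beta_hi betaI / beta_lo betaI * ((size ch).*2 * (size ch).*2.+1)%:R).
by move=> q q_inst; apply: fan_penalty_le => //; lia.
Qed.
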